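(* For every graph $G=(V,E)$, every edge ordering, and every integer $f\ge 1$, the output $H$ of the algorithm $\mathsf{FTGreedyMFDCertificate}(G,f)$ is an $f$-MFD connectivity certificate of $G$.
   Context: For $F\subseteq V\cup E$, $G-F$ is obtained by deleting the vertices of $F\cap V$ (with incident edges) and the edges of $F\cap E$; $F$ damages an edge $e$ if $e$ is not an edge of $G-F$. For $v\in V$ let $\deg_G(v,F)=|\{u\in N_G(v): u\in F\text{ or }\{u,v\}\in F\}|$ and $\deg_G(F)=\max_{v\in V\setminus F}\deg_G(v,F)$. The algorithm $\mathsf{FTGreedyMFDCertificate}(G,f)$, given the edges ordered $e_1,\dots,e_m$ with $e_i=\{u_i,v_i\}$: start with $H=(V,\emptyset)$; for $i=1,\dots,m$, if there exists $F\subseteq V\cup E$ with $\deg_G(F)\le f$ that does not damage $e_i$ such that $u_i$ and $v_i$ are disconnected in $H-F$, add $e_i$ to $H$; return $H$. A subgraph $H\subseteq G$ is an $f$-MFD connectivity certificate of $G$ if for every $F\subseteq V\cup E$ with $\deg_G(F)\le f$, $G-F$ and $H-F$ have the same connected components. *)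

From mathcomp Require Import all_boot.
Set Implicit Arguments. Unset Strict Implicit. Unset Printing Implicit Defensive.

Section FT.
Variable V : finType.

(* An edge
   ordering is a sequence of ordered pairs (u_i, v_i) with e_i = {u_i, v_i}. *)
Definition edg (p : V * V) : {set V} := [set p.1; p.2].

Definition simple_graph (E : {set {set V}}) : Prop :=
  forall e, e \in E -> #|e| = 2.

Definition edge_ordering (E : {set {set V}}) (es : seq (V * V)) : Prop :=
  uniq (map edg es) /\ [set edg p | p in es] = E.

(* A fault set F ⊆ V ∪ E is a pair (FV, FE) with FV ⊆ V and FE ⊆ E. *)

Definition nbr (E : {set {set V}}) (v : V) : {set V} := [set u | [set u; v] \in E].

Definition degF (E : {set {set V}}) (FV : {set V}) (FE : {set {set V}}) (v : V) : nat :=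
  #|[set u in nbr E v | (u \in FV) || ([set u; v] \in FE)]|.

Definition admissible (E : {set {set V}}) (f : nat) (FV : {set V}) (FE : {set {set V}}) : bool :=
  (FE \subset E) && [forall v, (v \notin FV) ==> (degF E FV FE v <= f)].

Definition adjF (H : {set {set V}}) (FV : {set V}) (FE : {set {set V}}) : rel V :=
  fun x y => [&& x \notin FV, y \notin FV, [set x; y] \in H & [set x; y] \notin FE].

Definition damages (FV : {set V}) (FE : {set {set V}}) (p : V * V) : bool :=
  [|| p.1 \in FV, p.2 \in FV | edg p \in FE].

Definition ftstep (E : {set {set V}}) (f : nat) (H : {set {set V}}) (p : V * V)
  : {set {set V}} :=
  if [exists FV : {set V}, exists FE : {set {set V}},
        [&& admissible E f FV FE, ~~ damages FV FE p &
            ~~ connect (adjF H FV FE) p.1 p.2]]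
  then edg p |: H else H.

Definition FTGreedyMFDCertificate (E : {set {set V}}) (f : nat) (es : seq (V * V))
  : {set {set V}} :=
  foldl (ftstep E f) set0 es.

Definition MFD_certificate (E : {set {set V}}) (f : nat) (H : {set {set V}}) : Prop :=
  H \subset E /\
  forall (FV : {set V}) (FE : {set {set V}}), admissible E f FV FE ->
    forall u v, u \notin FV -> v \notin FV ->
      connect (adjF E FV FE) u v = connect (adjF H FV FE) u v.

End FT.

(* The greedy run only ever adds edges, so connectivity in [H - F] can only
   grow.  When an undamaged edge {u, v} is examined and u, v are disconnected
   in the current [H - F] for some admissible F, the edge is added; otherwise
   they are already connected in [H - F].  Either way its endpoints end up
   connected in the final [H - F], and every edge of [G - F] is undamaged, so
   [G - F] and [H - F] have the same components. *)

From mathcomp Require Import all_boot.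

Set Implicit Arguments.
Unset Strict Implicit.
Unset Printing Implicit Defensive.

Section GreedyCertificate.
Variable V : finType.
Implicit Types (E H : {set {set V}}) (FV : {set V}) (FE : {set {set V}}).

Lemma adjF_sym H FV FE : symmetric (adjF H FV FE).
Proof. by move=> x y; rewrite /adjF setUC; case: (x \in FV); case: (y \in FV). Qed.

Lemma connect_adjF_subset H H' FV FE :
  H \subset H' -> subrel (connect (adjF H FV FE)) (connect (adjF H' FV FE)).
Proof.
move=> sHH'; apply: connect_sub => x y /and4P [xFV yFV xyH xyFE].
by apply: connect1; rewrite /adjF xFV yFV xyFE (subsetP sHH' _ xyH).
Qed.

Lemma connect_edg_sym (e : rel V) (p : V * V) x y :
  symmetric e -> [set x; y] = edg p -> connect e p.1 p.2 -> connect e x y.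
Proof.
move=> e_sym xy_p conn_p.
have : x \in edg p by rewrite -xy_p set21.
have : y \in edg p by rewrite -xy_p set22.
by rewrite !inE => /pred2P [] -> /pred2P [] ->; rewrite ?connect0 // sym_connect_sym.
Qed.

Lemma adjF_undamaged E FV FE x y (p : V * V) :
  adjF E FV FE x y -> [set x; y] = edg p -> ~~ damages FV FE p.
Proof.
move=> /and4P [xFV yFV _ xyFE] xy_p.
have notFV z : z \in edg p -> z \notin FV.
  by rewrite -xy_p !inE => /pred2P [] ->.
by rewrite /damages -xy_p (negbTE xyFE) orbF negb_or !notFV ?set21 ?set22.
Qed.

Lemma MFD_certificate_from_edges E f H :
  H \subset E ->
  (forall FV FE, admissible E f FV FE ->
     forall x y, adjF E FV FE x y -> connect (adjF H FV FE) x y) ->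
  MFD_certificate E f H.
Proof.
move=> sHE edgesH; split=> // FV FE adm u v _ _.
apply/idP/idP; last exact: connect_adjF_subset.
by move: u v; apply: connect_sub; apply: edgesH.
Qed.

Variables (E : {set {set V}}) (f : nat).

Lemma ftstep_subset H p : H \subset ftstep E f H p.
Proof. by rewrite /ftstep; case: ifP => _; [apply: subsetUr | apply: subxx]. Qed.

Lemma foldl_ftstep_subset s H : H \subset foldl (ftstep E f) H s.
Proof.
elim: s H => [|p s IHs] H /=; first exact: subxx.
exact: subset_trans (ftstep_subset H p) (IHs _).
Qed.

Lemma foldl_ftstep_sub_edges s H :
  H \subset E -> {in s, forall p, edg p \in E} -> foldl (ftstep E f) H s \subset E.
Proof.
elim: s H => [|p s IHs] H //= sHE sE.
apply: IHs => [|q qs]; last by apply: sE; rewrite inE qs orbT.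
rewrite /ftstep; case: ifP => _ //.
by rewrite subUset sub1set sHE sE ?mem_head.
Qed.

Lemma foldl_ftstep_connect s H FV FE p :
  admissible E f FV FE -> p \in s -> ~~ damages FV FE p ->
  connect (adjF (foldl (ftstep E f) H s) FV FE) p.1 p.2.
Proof.
move=> adm; elim: s H => [|q s IHs] H //=; rewrite inE => /predU1P [-> | ps];
  last exact: IHs.
move=> undamaged; apply: connect_adjF_subset (foldl_ftstep_subset s _) _ _ _.
have [conn | disconn] := boolP (connect (adjF H FV FE) q.1 q.2).
  exact: connect_adjF_subset (ftstep_subset H q) _ _ conn.
have added : ftstep E f H q = edg q |: H.
  rewrite /ftstep ifT //; apply/existsP; exists FV; apply/existsP; exists FE.
  by rewrite adm undamaged disconn.
move: undamaged; rewrite added /damages !negb_or => /and3P [q1FV q2FV qFE].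
by apply: connect1; rewrite /adjF q1FV q2FV qFE setU11.
Qed.

End GreedyCertificate.

Theorem mainTheorem5 (V : finType) (E : {set {set V}}) (es : seq (V * V)) (f : nat) :
  simple_graph E -> edge_ordering E es -> 1 <= f ->
  MFD_certificate E f (FTGreedyMFDCertificate E f es).
Proof.
move=> _ [_ E_es] _.
have es_E : {in es, forall p, edg p \in E}.
  by move=> p ps; rewrite -E_es imset_f.
apply: MFD_certificate_from_edges.
  exact: foldl_ftstep_sub_edges (sub0set _) es_E.
move=> FV FE adm x y xy_GF.
have /imsetP [p ps xy_p] : [set x; y] \in [set edg p | p in es].
  by rewrite E_es; case/and4P: xy_GF.
apply: (connect_edg_sym (adjF_sym _ _ _) xy_p).
exact: foldl_ftstep_connect adm ps (adjF_undamaged xy_GF xy_p).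
Qed.
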